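(* Let $q$ be a prime power and $n,d$ integers with $1\leq d\leq n-1$. Then the design $\mathrm{PG}_d(n,q)$ is strongly additive under $\mathbb{Z}_{q^d}^{[n+1]_q}$, where $[m]_q=\frac{q^m-1}{q-1}$.
   Context: $\mathrm{PG}_d(n,q)$ is the design whose points are the points of the projective geometry $\mathrm{PG}(n,q)$ over $\mathbb{F}_q$ and whose blocks are the point sets of all $d$-dimensional projective subspaces; it has $[n+1]_q$ points and block size $[d+1]_q$. A subset of an abelian group $G$ is zero-sum if the sum of its elements is $0$. A design $(V,\mathscr B)$ with block size $k$ is strongly additive under $G$ if there is an injective map $f:V\to G$ such that, for every $k$-subset $S\subseteq V$, $S\in\mathscr B$ if and only if $f(S)$ is zero-sum. *)

From HB Require Import structures.
From mathcomp Require Import all_boot all_order all_algebra all_field.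
Set Implicit Arguments. Unset Strict Implicit. Unset Printing Implicit Defensive.
Import GRing.Theory.
Local Open Scope ring_scope.

Definition qnum (q m : nat) : nat := ((q ^ m - 1) %/ (q - 1))%N.

(* Points of PG(n, F): 1-dimensional subspaces of F^(n+1), each represented
   canonically by the square matrix <<A>>%MS spanning it. *)
Definition PGpoint (F : finFieldType) (n : nat) : finType :=
  {A : 'M[F]_(n.+1) | (\rank A == 1%N) && (<<A>>%MS == A)}.

(* Blocks of PG_d(n, F): the point sets of the (d+1)-dimensional linear
   subspaces W of F^(n+1), i.e. the d-dimensional projective subspaces. *)
Definition PG_blocks (F : finFieldType) (n d : nat) : {set {set PGpoint F n}} :=
  [set S : {set PGpoint F n} |
     [exists W : 'M[F]_(n.+1),
        (\rank W == d.+1) && (S == [set p : PGpoint F n | (val p <= W)%MS])]].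

Definition strongly_additive (V : finType) (B : {set {set V}}) (k : nat)
    (G : zmodType) : Prop :=
  exists f : V -> G, injective f /\
    forall S : {set V}, #|S| = k -> (S \in B <-> \sum_(x in S) f x = 0).

(* The coordinates of the group are indexed by the points z of PG(n,q); a
   point x is sent to the 0/1 vector whose z-coordinate is 1 iff x is off the
   hyperplane z^perp, so the z-coordinate of the sum over a set S counts the
   points of S off z^perp.  A (d+1)-dimensional subspace meets a hyperplane in
   all or all but q^d of its points, so blocks are zero-sum.  Conversely, let
   |S| = [d+1]_q with all these counts divisible by q^d.  Each count is then 0
   or q^d, and it is 0 exactly for the hyperplanes containing the span W of S;
   if W has rank r, counting the pairs (x, z) with x in S off z^perp gives
   q^(n+1-r) [r]_q q^d = q^n [d+1]_q.  As [m]_q = 1 mod q, comparing powers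
   of q forces r = d+1, and S, lying among the [d+1]_q points of W, is all of
   them. *)

From mathcomp Require Import all_boot all_order all_algebra all_field.
From mathcomp Require Import mxabelem zify.
Set Implicit Arguments. Unset Strict Implicit. Unset Printing Implicit Defensive.
Import GRing.Theory.

Definition qint (q m : nat) : nat := \sum_(i < m) q ^ i.

Lemma qintS q m : qint q m.+1 = qint q m + q ^ m.
Proof. by rewrite /qint big_ord_recr. Qed.

Lemma qintD q a b : qint q (a + b) = qint q a + q ^ a * qint q b.
Proof.
elim: b => [|b IHb]; first by rewrite /qint big_ord0 !(addn0, muln0).
by rewrite addnS !qintS IHb expnD mulnDr addnA.
Qed.

Lemma mul_subn1_qint q m : (q - 1) * qint q m = q ^ m - 1.
Proof.
case: q => [|q]; first by rewrite mul0n; case: m => // m; rewrite exp0n.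
elim: m => [|m IHm]; first by rewrite /qint big_ord0 muln0.
rewrite qintS mulnDr IHm expnS.
have : 0 < q.+1 ^ m by rewrite expn_gt0.
nia.
Qed.

Lemma qnum_qint q m : 1 < q -> qnum q m = qint q m.
Proof. by move=> q_gt1; rewrite /qnum -mul_subn1_qint mulKn // subn_gt0. Qed.

Lemma qint_mod q m : 1 < q -> 0 < m -> qint q m %% q = 1.
Proof.
move=> q_gt1; case: m => // m _.
by rewrite -add1n qintD /qint big_ord1 expn0 expn1 addnC mulnC modnMDl modn_small.
Qed.

Lemma qint_lt_expn q m : 1 < q -> qint q m < q ^ m.
Proof.
move=> q_gt1; elim: m => [|m IHm]; first by rewrite /qint big_ord0.
rewrite qintS expnS; nia.
Qed.

Lemma expn_qint_inj q a b r s : 1 < q -> 0 < r -> 0 < s ->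
  q ^ a * qint q r = q ^ b * qint q s -> a = b.
Proof.
move=> q_gt1; wlog le_ab : a b r s / a <= b.
  move=> hwlog r_gt0 s_gt0 E; case/orP: (leq_total a b) => le; first exact: (hwlog a b r s).
  exact/esym/(hwlog b a s r).
move=> r_gt0 s_gt0.
rewrite -(subnKC le_ab) expnD -mulnA => /eqP; rewrite eqn_pmul2l ?expn_gt0 ?(ltnW q_gt1) //.
case: (b - a) => [|k /eqP E]; first by rewrite addn0.
by have := qint_mod q_gt1 r_gt0; rewrite E expnS -mulnA modnMr.
Qed.

Section ProjectiveSpace.
Variables (F : finFieldType) (n : nat).
Local Notation P := (PGpoint F n).
Local Notation q := #|F|.

Definition pts m (W : 'M[F]_(m, n.+1)) : {set P} := [set p : P | (val p <= W)%MS].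

Lemma rank_pt (p : P) : \rank (val p) = 1.
Proof. by case: p => A /= /andP[/eqP]. Qed.

Lemma genmx_pt (p : P) : <<val p>>%MS = val p.
Proof. by case: p => A /= /andP[_ /eqP]. Qed.

Lemma submx_pt_eq (p p' : P) : (val p <= val p')%MS -> p = p'.
Proof.
move=> sub_pp'; apply: val_inj; rewrite -genmx_pt -[val p']genmx_pt.
by apply/eq_genmx/eqmxP; rewrite -(mxrank_leqif_eq sub_pp') !rank_pt.
Qed.

Section Line.
Variables (v : 'rV[F]_n.+1) (v_neq0 : v != 0%R).

Fact line_key : (\rank <<v>>%MS == 1) && (<<<<v>>%MS>>%MS == <<v>>%MS).
Proof. by rewrite genmxE rank_rV v_neq0 genmx_id !eqxx. Qed.

Definition line : P := Sub <<v>>%MS line_key.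

Lemma line_sub m (A : 'M_(m, n.+1)) : (val line <= A)%MS = (v <= A)%MS.
Proof. by rewrite /= genmxE. Qed.

Lemma sub_pt_line (p : P) : (v <= val p)%MS = (p == line).
Proof.
apply/idP/eqP => [v_p|->]; last by rewrite /= genmxE.
by apply/esym/submx_pt_eq; rewrite line_sub.
Qed.

End Line.

Lemma card_rowgD0 m (A : 'M[F]_(m, n.+1)) : #|rowg A :\ 0%R| = q ^ \rank A - 1.
Proof. by rewrite -card_rowg (cardsD1 0%R (rowg A)) !inE sub0mx add1n subn1. Qed.

Lemma card_pts_mul m (W : 'M[F]_(m, n.+1)) : #|pts W| * (q - 1) = q ^ \rank W - 1.
Proof.
rewrite -sum_nat_const -card_rowgD0 -sum1_card.
transitivity (\sum_(p in pts W) \sum_(v in rowg W :\ 0%R | (v <= val p)%MS) 1).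
  apply: eq_bigr => p; rewrite inE => p_W.
  rewrite (_ : q - 1 = #|rowg (val p) :\ 0%R|); last by rewrite card_rowgD0 rank_pt.
  rewrite sum1dep_card; apply: eq_card => v; rewrite !inE.
  by case v_p: (v <= val p)%MS; rewrite ?andbF ?andbT ?(submx_trans v_p p_W) ?andbT.
rewrite (exchange_big_dep (fun v => v \in rowg W :\ 0%R)) /=; last by move=> p v _ /andP[].
apply: eq_bigr => v; rewrite !inE => /andP[v_neq0 v_W].
rewrite sum1dep_card (eq_card (B := [set line v_neq0])) ?cards1 // => p.
by rewrite !inE v_neq0 v_W sub_pt_line !andTb; case: eqP => [->|_]; rewrite ?andbT ?andbF ?line_sub.
Qed.

Lemma card_pts m (W : 'M[F]_(m, n.+1)) : #|pts W| = qint q (\rank W).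
Proof.
have q1_gt0 : 0 < q - 1 by rewrite subn_gt0 card_finNzRing_gt1.
apply/eqP; rewrite -(eqn_pmul2r q1_gt0) card_pts_mul mulnC mul_subn1_qint //.
Qed.

Lemma card_PG : #|P| = qint q n.+1.
Proof.
rewrite -(mxrank1 F n.+1) -card_pts -cardsT.
by apply: eq_card => p; rewrite !inE submx1.
Qed.

Lemma sub_kermx_trC m1 m2 (A : 'M[F]_(m1, n.+1)) (B : 'M[F]_(m2, n.+1)) :
  (B <= kermx A^T)%MS = (A <= kermx B^T)%MS.
Proof. by rewrite !sub_kermx -(inj_eq (@trmx_inj _ _ _)) trmx_mul trmxK trmx0. Qed.

Lemma kermx_trK m (A : 'M[F]_(m, n.+1)) : (A == kermx (kermx A^T)^T)%MS.
Proof.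
have sub_A : (A <= kermx (kermx A^T)^T)%MS by rewrite sub_kermx_trC.
rewrite -(mxrank_leqif_eq sub_A) !mxrank_ker !mxrank_tr mxrank_ker mxrank_tr.
by rewrite subKn ?rank_leq_col.
Qed.

Definition hyp (z : P) : 'M[F]_n.+1 := kermx (val z)^T.

Definition orth (x z : P) : bool := (val x <= hyp z)%MS.

Lemma rank_hyp z : \rank (hyp z) = n.
Proof. by rewrite mxrank_ker mxrank_tr rank_pt subn1. Qed.

Lemma orthC x z : orth x z = orth z x.
Proof. exact: sub_kermx_trC. Qed.

Lemma pts_kermx_tr m (A : 'M[F]_(m, n.+1)) : pts (kermx A^T) = [set z | A <= hyp z]%MS.
Proof. by apply/setP => z; rewrite !inE sub_kermx_trC. Qed.

Lemma sub_pts_submx m1 m2 (A : 'M[F]_(m1, n.+1)) (B : 'M[F]_(m2, n.+1)) :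
  pts A \subset pts B -> (A <= B)%MS.
Proof.
move/subsetP=> sAB; apply/row_subP => i.
have [->|v_neq0] := eqVneq (row i A) 0%R; first exact: sub0mx.
have := sAB (line v_neq0); rewrite !inE !line_sub; apply; exact: row_sub.
Qed.

Lemma orth_inj x y : (forall z, orth x z = orth y z) -> x = y.
Proof.
move=> orth_xy; apply/esym/submx_pt_eq.
have hyp_xy : (hyp x <= hyp y)%MS.
  by apply/sub_pts_submx/subsetP => z; rewrite !inE -!/(orth z _) !(orthC z) orth_xy.
by rewrite (eqmxP (kermx_trK (val x))) sub_kermx_trC.
Qed.

Definition off_hyp (S : {set P}) (z : P) : {set P} := [set x in S | ~~ orth x z].

Lemma card_off_hypE (S : {set P}) z : #|off_hyp S z| = \sum_(x in S) (~~ orth x z : nat).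
Proof. by rewrite -sum1dep_card big_mkcondr. Qed.

Lemma rank_capmx_hyp m (W : 'M[F]_(m, n.+1)) z :
  ~~ (W <= hyp z)%MS -> \rank (W :&: hyp z)%MS = (\rank W).-1.
Proof.
move=> W_hyp.
have hyp_lt : (hyp z < W + hyp z)%MS.
  by rewrite ltmxE addsmxSr /=; apply: contra W_hyp; apply: submx_trans (addsmxSl _ _).
have := mxrank_sum_cap W (hyp z); have := rank_ltmx hyp_lt.
have := rank_leq_col (W + hyp z)%MS; rewrite rank_hyp; lia.
Qed.

Lemma card_off_hyp_pts m (W : 'M[F]_(m, n.+1)) z :
  #|off_hyp (pts W) z| = if (W <= hyp z)%MS then 0 else q ^ (\rank W).-1.
Proof.
case: ifPn => [W_hyp | W_hyp].
  apply: eq_card0 => x; rewrite !inE /orth.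
  by case x_W: (val x <= W)%MS; rewrite ?(submx_trans x_W W_hyp).
have := cardsID (pts (hyp z)) (pts W).
have -> : pts W :&: pts (hyp z) = pts (W :&: hyp z)%MS.
  by apply/setP => x; rewrite !inE sub_capmx.
have -> : pts W :\: pts (hyp z) = off_hyp (pts W) z.
  by apply/setP => x; rewrite !inE andbC.
rewrite !card_pts rank_capmx_hyp //.
case rW: (\rank W) => [|r].
  by move/eqP: rW W_hyp; rewrite mxrank_eq0 => /eqP ->; rewrite sub0mx.
by rewrite qintS => /eqP; rewrite eqn_add2l => /eqP.
Qed.

Lemma card_not_orth x : #|[set z | ~~ orth x z]| = q ^ n.
Proof.
have := cardsC (pts (hyp x)); rewrite card_PG card_pts rank_hyp qintS.
have -> : ~: pts (hyp x) = [set z | ~~ orth x z].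
  by apply/setP => z; rewrite !inE orthC.
by move/eqP; rewrite eqn_add2l => /eqP.
Qed.

Lemma sum_card_off_hyp (S : {set P}) : \sum_z #|off_hyp S z| = #|S| * q ^ n.
Proof.
under eq_bigr do rewrite -sum1dep_card.
rewrite (exchange_big_dep (mem S)) /=; last by move=> z x _ /andP[].
rewrite -sum_nat_const; apply: eq_bigr => x x_S.
by rewrite sum1dep_card -(card_not_orth x); apply: eq_card => z; rewrite !inE x_S.
Qed.

Definition span (S : {set P}) : 'M[F]_n.+1 := (\sum_(p in S) val p)%MS.

Lemma sub_pts_span (S : {set P}) : S \subset pts (span S).
Proof. by apply/subsetP => p p_S; rewrite inE (sumsmx_sup p). Qed.

Lemma off_hyp_eq0 (S : {set P}) z : (off_hyp S z == set0) = (span S <= hyp z)%MS.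
Proof.
apply/eqP/sumsmx_subP => [off0 p p_S | span_hyp].
  apply/negPn/negP => not_orth.
  by have := in_set0 p; rewrite -off0 inE p_S not_orth.
apply/setP => x; rewrite !inE; case x_S: (x \in S) => //=.
by rewrite /orth span_hyp.
Qed.

Lemma card_compl_pts_kermx_tr m (W : 'M[F]_(m, n.+1)) :
  #|~: pts (kermx W^T)| = q ^ (n.+1 - \rank W) * qint q (\rank W).
Proof.
have := cardsC (pts (kermx W^T)).
rewrite card_PG card_pts mxrank_ker mxrank_tr -[in qint _ n.+1](subnK (rank_leq_col W)) qintD.
by move/eqP; rewrite eqn_add2l => /eqP.
Qed.

Lemma block_of_dvd_card_off_hyp d (S : {set P}) : #|S| = qint q d.+1 ->
  (forall z, q ^ d %| #|off_hyp S z|) -> \rank (span S) = d.+1 /\ S = pts (span S).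
Proof.
move=> card_S dvd_off; have q_gt1 := card_finNzRing_gt1 F.
set W := span S; set r := \rank W.
have card_off z : #|off_hyp S z| = if (W <= hyp z)%MS then 0 else q ^ d.
  rewrite -off_hyp_eq0 -cards_eq0; case: eqP => // /eqP off_neq0.
  have : #|off_hyp S z| <= #|S|.
    by apply/subset_leq_card/subsetP => x; rewrite inE => /andP[].
  have := qint_lt_expn d q_gt1; case/dvdnP: (dvd_off z) off_neq0 => k ->.
  rewrite card_S qintS => /eqP; move: (q ^ d) (qint q d) => Q g.
  case: k => [|[|k]]; nia.
have sum_off : \sum_z #|off_hyp S z| = #|~: pts (kermx W^T)| * q ^ d.
  rewrite -sum_nat_const [RHS]big_mkcond; apply: eq_bigr => z _.
  by rewrite card_off pts_kermx_tr !inE; case: (W <= hyp z)%MS.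
have r_gt0 : 0 < r.
  have qd_gt0 : 0 < q ^ d by rewrite expn_gt0 ltnW.
  have := subset_leq_card (sub_pts_span S); rewrite card_S card_pts qintS -/W -/r.
  by case: (posnP r) => [->|//]; rewrite /qint big_ord0; lia.
have r_eq : r = d.+1.
  have : q ^ (n.+1 - r + d) * qint q r = q ^ n * qint q d.+1.
    by rewrite expnD mulnAC -card_compl_pts_kermx_tr -sum_off sum_card_off_hyp card_S mulnC.
  move/expn_qint_inj => /(_ q_gt1 r_gt0 (ltn0Sn d)).
  have := rank_leq_col W; rewrite -/r; lia.
by split=> //; apply/eqP; rewrite eqEcard sub_pts_span card_pts card_S -/W -/r r_eq leqnn.
Qed.

Lemma mem_PG_blocks d (S : {set P}) : #|S| = qint q d.+1 ->
  S \in PG_blocks F n d <-> forall z, q ^ d %| #|off_hyp S z|.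
Proof.
move=> card_S; split.
  rewrite inE => /existsP[W /andP[/eqP rank_W /eqP ->]] z.
  by rewrite card_off_hyp_pts rank_W; case: ifP.
move=> dvd_off; have [rank_span S_span] := block_of_dvd_card_off_hyp card_S dvd_off.
rewrite inE; apply/existsP; exists (span S).
by rewrite rank_span {1}S_span !eqxx.
Qed.

End ProjectiveSpace.

Lemma row_natr_Zp_eq0 m N (c : 'I_N -> nat) : 1 < m ->
  (\row_j (c j)%:R = 0 :> 'rV['Z_m]_N)%R <-> forall j, m %| c j.
Proof.
move=> m_gt1; split => [/rowP c0 j | dvd_c]; last first.
  by apply/rowP => j; apply: val_inj; rewrite !mxE /= val_Zp_nat // (eqP (dvd_c j)).
by have := c0 j; rewrite !mxE => /(congr1 (@nat_of_ord _)); rewrite val_Zp_nat // => /eqP.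
Qed.

Theorem theorem4p1 (F : finFieldType) (n d : nat) :
  (1 <= d)%N -> (d <= n - 1)%N ->
  strongly_additive (PG_blocks F n d) (qnum #|F| d.+1)
    'rV['Z_(#|F| ^ d)]_(qnum #|F| n.+1).
Proof.
move=> d_gt0 _; have q_gt1 := card_finNzRing_gt1 F.
have m_gt1 : 1 < #|F| ^ d by rewrite -[1](expn0 #|F|) ltn_exp2l.
have card_P : #|PGpoint F n| = qnum #|F| n.+1 by rewrite card_PG qnum_qint.
pose pt j := enum_val (cast_ord (esym card_P) j).
pose idx z := cast_ord card_P (enum_rank z).
have idxK z : pt (idx z) = z by rewrite /pt /idx cast_ordK enum_rankK.
pose f x : 'rV['Z_(#|F| ^ d)]_(qnum #|F| n.+1) := (\row_j (~~ orth x (pt j) : nat)%:R)%R.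
exists f; split.
  move=> x y /rowP fxy; apply: orth_inj => z.
  have := fxy (idx z); rewrite !mxE idxK => /(congr1 (@nat_of_ord _)).
  rewrite /= !val_Zp_nat // !modn_small ?(leq_ltn_trans (leq_b1 _)) //.
  by do 2!case: orth.
move=> S card_S; rewrite mem_PG_blocks ?card_S ?qnum_qint //.
have -> : (\sum_(x in S) f x = \row_j #|off_hyp S (pt j)|%:R)%R.
  apply/rowP => j; rewrite summxE !mxE card_off_hypE natr_sum.
  by apply: eq_bigr => x _; rewrite mxE.
split=> [dvd_off | /(row_natr_Zp_eq0 _ m_gt1) dvd_off z].
  by apply/(row_natr_Zp_eq0 _ m_gt1) => j.
by have := dvd_off (idx z); rewrite idxK.
Qed.
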